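(* Let $x_+,x_-\in\hat A_n$ be complementary operators. Then (a) $[ia_k^\dagger a_k,[x_+,x_-]]=0$ for all $k\in\{1,\dots,n\}$, and (b) $[x_+,x_-]$ is a real linear combination of elements of the form $g_+^{(\tilde\alpha,\tilde\alpha)}=2i\,a^{(\tilde\alpha,\tilde\alpha)}$ with $\tilde\alpha\in\mathbb N_0^n$; i.e. $[x_+,x_-]\in\hat A_n^0\oplus\hat A_n^=$.
   Context: Fix $n\ge 1$. The Weyl algebra $A_n$ is the unital associative $\mathbb{C}$-algebra generated by $a_1,\dots,a_n,a_1^\dagger,\dots,a_n^\dagger$ subject to $[a_i,a_j^\dagger]=\delta_{ij}$ and $[a_i,a_j]=[a_i^\dagger,a_j^\dagger]=0$. For $\gamma=(\alpha,\beta)\in\mathbb N_0^{2n}$, $a^{\gamma}=(a_1^\dagger)^{\alpha_1}\cdots(a_n^\dagger)^{\alpha_n}a_1^{\beta_1}\cdots a_n^{\beta_n}$, $|\gamma|=\sum_j\alpha_j+\sum_j\beta_j$. The adjoint $\dagger$ is the conjugate-linear anti-automorphism with $(a_j)^\dagger=a_j^\dagger$, $(a_j^\dagger)^\dagger=a_j$. The skew-hermitian Weyl algebra is $\hat A_n=\{g\in A_n:g^\dagger=-g\}$, a real Lie algebra under the commutator; $g_+^\gamma=i((a^\gamma)^\dagger+a^\gamma)$. $\hat A_n^0$ is the real span of $2i$ and $2ia_k^\dagger a_k$; $\hat A_n^=$ is the real span of $2i\,a^{(\alpha,\alpha)}$ with $2|\alpha|\ge4$. Two elements $x_+,x_-\in\hat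 A_n$, neither lying in $\hat A_n^0\oplus\hat A_n^=$, are called complementary if for each $k\in\{1,\dots,n\}$ either (a) $[ia_k^\dagger a_k,x_\sigma]=0$ for both $\sigma\in\{+,-\}$, or (b) there is a real $\mu_k\neq0$ with $[ia_k^\dagger a_k,x_\sigma]=\sigma\mu_k x_{-\sigma}$ for both $\sigma\in\{+,-\}$ (signs identified with $\pm1$), and at least one index $k$ satisfies (b). *)

From HB Require Import structures.
From mathcomp Require Import all_boot all_order all_algebra all_field.
From mathcomp Require Import mpoly.

Set Implicit Arguments.
Unset Strict Implicit.
Unset Printing Implicit Defensive.

Import Order.TTheory GRing.Theory Num.Theory.
Local Open Scope ring_scope.

(* The Weyl algebra A_n, realised on its normal-ordered (PBW) basis.          *)
(* An element of A_n is a finite C-linear combination of the normal-ordered   *)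
(* monomials a^(alpha,beta) = (a_1^+)^alpha_1 .. (a_n^+)^alpha_n              *)
(*                            a_1^beta_1 .. a_n^beta_n.                       *)
(* We store it as a polynomial in 2n commuting variables over algC: the       *)
(* variable (lshift n j) stands for a_j^+ and (rshift n j) for a_j, and the   *)
(* monomial 'X_[m] stands for a^(alpha,beta) with alpha_j = m (lshift n j),   *)
(* beta_j = m (rshift n j).  The (noncommutative) Weyl product is defined     *)
(* below by the normal-ordering (Wick) formula; the additive structure and    *)
(* scalar multiplication are those of {mpoly algC[n+n]}.                      *)

Definition weyl (n : nat) := {mpoly algC[n + n]}.

Definition alphaE n (m : 'X_{1..n + n}) (j : 'I_n) : nat := m (lshift n j).
Definition betaE n (m : 'X_{1..n + n}) (j : 'I_n) : nat := m (rshift n j).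

Definition mkexp n (al be : 'I_n -> nat) : 'X_{1..n + n} :=
  [multinom (match split i with inl j => al j | inr j => be j end) | i < n + n].

(* Product of normal-ordered monomials, one mode at a time:
   (a^+^al a^be)(a^+^ga a^de)
     = sum_k C(be,k) C(ga,k) k! a^+^(al+ga-k) a^(be+de-k).
   The k_j range over 'I_N with N larger than every be_j; the binomial factor
   C(be_j,k_j) vanishes for k_j > be_j, so the sum is the exact one. *)
Definition wmono n (m1 m2 : 'X_{1..n + n}) : weyl n :=
  let N := (mdeg m1).+1 in
  \sum_(k : {ffun 'I_n -> 'I_N})
     (\prod_(j < n) ('C(betaE m1 j, k j) * 'C(alphaE m2 j, k j) * (k j)`!))%N%:R
     *: 'X_[mkexp (fun j => alphaE m1 j + alphaE m2 j - k j)%N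
                  (fun j => betaE m1 j + betaE m2 j - k j)%N].

Definition wmul n (p q : weyl n) : weyl n :=
  \sum_(m1 <- msupp p) \sum_(m2 <- msupp q) (p@_m1 * q@_m2) *: wmono m1 m2.

Definition wcomm n (p q : weyl n) : weyl n := wmul p q - wmul q p.

(* the adjoint: conjugate-linear anti-automorphism with a_j <-> a_j^+;
   on the basis, (a^(alpha,beta))^+ = a^(beta,alpha) *)
Definition wdag n (p : weyl n) : weyl n :=
  \sum_(m <- msupp p) (p@_m)^* *: 'X_[mkexp (betaE m) (alphaE m)].

Definition skew_herm n (g : weyl n) : Prop := wdag g = - g.

Definition amono n (al be : 'I_n -> nat) : weyl n := 'X_[mkexp al be].

Definition numop n (k : 'I_n) : weyl n :=
  'i *: amono (fun j => (j == k)%N : nat) (fun j => (j == k)%N : nat).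

(* \hat A_n^0 (+) \hat A_n^= : the real span of 2 i a^(alpha,alpha),
   alpha ranging over all of N_0^n (|alpha| = 0 gives 2i, |alpha| = 1 gives
   2 i a_k^+ a_k, |alpha| >= 2 gives \hat A_n^=). *)
Definition in_A0_Aeq n (g : weyl n) : Prop :=
  exists s : seq ((nat ^ n)%type * algC),
    all (fun x => x.2 \is Num.real) s /\
    g = \sum_(x <- s) x.2 *: ((2%:R * 'i) *: amono x.1 x.1).

Definition mode_cond n (xp xm : weyl n) (k : 'I_n) (mu : algC) : Prop :=
  mu \is Num.real /\ mu != 0 /\
  wcomm (numop k) xp = mu *: xm /\ wcomm (numop k) xm = - (mu *: xp).

Definition complementary n (xp xm : weyl n) : Prop :=
  skew_herm xp /\ skew_herm xm /\ ~ in_A0_Aeq xp /\ ~ in_A0_Aeq xm /\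
  (forall k : 'I_n,
     (wcomm (numop k) xp = 0 /\ wcomm (numop k) xm = 0) \/
     (exists mu, mode_cond xp xm k mu)) /\
  (exists k : 'I_n, exists mu, mode_cond xp xm k mu).

From HB Require Import structures.
From mathcomp Require Import all_boot all_order all_algebra all_field.
From mathcomp Require Import mpoly.
From mathcomp Require Import ring.
Import GRing.Theory Num.Theory.
Local Open Scope ring_scope.
Set Implicit Arguments.

(* The inner derivation [ad (i a_k^+ a_k)] is diagonal on the normal-ordered
   basis: it multiplies a^(alpha,beta) by the weight i (alpha_k - beta_k).
   Since every term of the Wick expansion of a^(alpha,beta) a^(gamma,delta)
   has exponent (alpha + gamma - c, beta + delta - c) for some contraction
   vector c, weights add under the Weyl product, so this diagonal map D_k
   ([numder k] below) is a derivation.  For a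
   complementary pair, D_k x_+ = mu x_- and D_k x_- = - mu x_+ (or both
   vanish), whence D_k [x_+, x_-] = mu ([x_-, x_-] - [x_+, x_+]) = 0.
   An element killed by every D_k is supported on the diagonal monomials
   a^(alpha,alpha); as [x_+, x_-] is moreover skew-hermitian and the adjoint
   fixes these monomials, its coefficients are purely imaginary, i.e. real
   multiples of 2i. *)

Section WeylAlgebra.
Variable n : nat.
Implicit Types (p q xp xm : weyl n) (m : 'X_{1..n + n}) (k : 'I_n).

Lemma alphaE_mkexp (a b : 'I_n -> nat) j : alphaE (mkexp a b) j = a j.
Proof. by rewrite /alphaE /mkexp mnmE -[lshift n j]/(unsplit (inl j)) unsplitK. Qed.

Lemma betaE_mkexp (a b : 'I_n -> nat) j : betaE (mkexp a b) j = b j.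
Proof. by rewrite /betaE /mkexp mnmE -[rshift n j]/(unsplit (inr j)) unsplitK. Qed.

Lemma mkexpK m : mkexp (alphaE m) (betaE m) = m.
Proof.
apply/mnmP=> i; rewrite /mkexp mnmE /alphaE /betaE.
by case: splitP => j hj; congr (m _); apply: val_inj.
Qed.

Lemma eq_mkexp (a b a' b' : 'I_n -> nat) :
  a =1 a' -> b =1 b' -> mkexp a b = mkexp a' b'.
Proof. by move=> ha hb; apply/mnmP=> i; rewrite /mkexp !mnmE; case: split. Qed.

Lemma mnm_le_mdeg m i : (m i <= mdeg m)%N.
Proof. by rewrite mdegE (bigD1 i) //= leq_addr. Qed.

Lemma msupp_subset p q :
  (forall m, p@_m = 0 -> q@_m = 0) -> {subset msupp q <= msupp p}.
Proof. by move=> h m; rewrite !mcoeff_msupp; apply: contraNN => /eqP /h ->. Qed.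

Lemma big_msupp_superset (V : zmodType) (s : seq 'X_{1..n + n}) p
    (F : 'X_{1..n + n} -> V) :
  uniq s -> {subset msupp p <= s} -> (forall m, p@_m = 0 -> F m = 0) ->
  \sum_(m <- s) F m = \sum_(m <- msupp p) F m.
Proof.
move=> us sub hF; rewrite (bigID (mem (msupp p))) /= [X in _ + X]big1 ?addr0.
  rewrite -big_filter; apply: perm_big; apply: uniq_perm.
  - exact: filter_uniq.
  - exact: msupp_uniq.
  by move=> m; rewrite mem_filter; case: (boolP (m \in msupp p)) => // /sub ->.
by move=> m hm; apply: hF; apply/eqP; rewrite mcoeff_eq0.
Qed.
Arguments big_msupp_superset {V s p F}.

Lemma mcoeff_sum_scaleX (s : seq 'X_{1..n + n}) (c : 'X_{1..n + n} -> algC)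
    f g m0 :
  uniq s -> cancel f g -> cancel g f ->
  (\sum_(m <- s) c m *: ('X_[f m] : weyl n))@_m0
    = if g m0 \in s then c (g m0) else 0.
Proof.
move=> us fK gK; rewrite raddf_sum /=.
under eq_bigr => m _ do rewrite mcoeffZ mcoeffX.
have E m : (f m == m0) = (m == g m0).
  by apply/eqP/eqP => [<-|->]; [rewrite fK|rewrite gK].
case: ifP => hs.
  rewrite (bigD1_seq (g m0)) //= E eqxx mulr1 big1 ?addr0 // => m /negbTE hm.
  by rewrite E hm mulr0.
rewrite big_seq big1 // => m ms; rewrite E.
by case: eqP ms hs => [->->|] //; rewrite mulr0.
Qed.

Lemma wmul_sum_superset p q (s1 s2 : seq 'X_{1..n + n}) :
  uniq s1 -> uniq s2 -> {subset msupp p <= s1} -> {subset msupp q <= s2} ->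
  wmul p q = \sum_(m1 <- s1) \sum_(m2 <- s2) (p@_m1 * q@_m2) *: wmono m1 m2.
Proof.
move=> u1 u2 h1 h2; rewrite /wmul (big_msupp_superset u1 h1); last first.
  by move=> m ->; apply: big1 => ? _; rewrite mul0r scale0r.
apply: eq_bigr=> m1 _; rewrite (big_msupp_superset u2 h2) // => m ->.
by rewrite mulr0 scale0r.
Qed.

Lemma wmul_coef_transform (cp cq : 'X_{1..n + n} -> algC) p q p' q' :
  (forall m, p'@_m = cp m * p@_m) -> (forall m, q'@_m = cq m * q@_m) ->
  wmul p' q'
    = \sum_(m1 <- msupp p) \sum_(m2 <- msupp q)
        (cp m1 * cq m2 * (p@_m1 * q@_m2)) *: wmono m1 m2.
Proof.
move=> hp hq; rewrite (wmul_sum_superset _ _ (msupp_uniq p) (msupp_uniq q)).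
- by apply: eq_bigr => m1 _; apply: eq_bigr => m2 _; rewrite hp hq; congr (_ *: _); ring.
- by apply: msupp_subset => m; rewrite hp => ->; rewrite mulr0.
by apply: msupp_subset => m; rewrite hq => ->; rewrite mulr0.
Qed.
Arguments wmul_coef_transform {cp cq p q p' q'}.

Lemma wmulZl c p q : wmul (c *: p) q = c *: wmul p q.
Proof.
have q1 m : q@_m = 1 * q@_m by rewrite mul1r.
rewrite (wmul_coef_transform (mcoeffZ c p) q1).
rewrite /wmul scaler_sumr; apply: eq_bigr => m1 _; rewrite scaler_sumr.
by apply: eq_bigr => m2 _; rewrite scalerA mulr1.
Qed.

Lemma wmulZr c p q : wmul p (c *: q) = c *: wmul p q.
Proof.
have p1 m : p@_m = 1 * p@_m by rewrite mul1r.
rewrite (wmul_coef_transform p1 (mcoeffZ c q)).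
rewrite /wmul scaler_sumr; apply: eq_bigr => m1 _; rewrite scaler_sumr.
by apply: eq_bigr => m2 _; rewrite scalerA mul1r.
Qed.

Lemma wmulNl p q : wmul (- p) q = - wmul p q.
Proof. by rewrite -scaleN1r wmulZl scaleN1r. Qed.

Lemma wmulNr p q : wmul p (- q) = - wmul p q.
Proof. by rewrite -scaleN1r wmulZr scaleN1r. Qed.

Lemma wmul0l q : wmul 0 q = 0.
Proof. by rewrite -[X in wmul X _](scale0r 0) wmulZl scale0r. Qed.

Lemma wmul0r p : wmul p 0 = 0.
Proof. by rewrite -[X in wmul _ X](scale0r 0) wmulZr scale0r. Qed.

Definition wick_term m1 m2 (f : 'I_n -> nat) : weyl n :=
  (\prod_(j < n) ('C(betaE m1 j, f j) * 'C(alphaE m2 j, f j) * (f j)`!))%N%:R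
  *: 'X_[mkexp (fun j => alphaE m1 j + alphaE m2 j - f j)%N
               (fun j => betaE m1 j + betaE m2 j - f j)%N].

Lemma wmonoE m1 m2 :
  wmono m1 m2
    = \sum_(c : {ffun 'I_n -> 'I_(mdeg m1).+1}) wick_term m1 m2 (fun j => c j).
Proof. by []. Qed.

Lemma eq_wick_term m1 m2 f g : f =1 g -> wick_term m1 m2 f = wick_term m1 m2 g.
Proof.
move=> e; rewrite /wick_term.
rewrite (eq_bigr (fun j => 'C(betaE m1 j, g j) * 'C(alphaE m2 j, g j) * (g j)`!)%N);
  last by move=> j _; rewrite e.
by congr (_ *: 'X_[_]); apply: eq_mkexp => j; rewrite e.
Qed.

Lemma wick_term_eq0 m1 m2 f j :
  (betaE m1 j < f j)%N \/ (alphaE m2 j < f j)%N -> wick_term m1 m2 f = 0.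
Proof.
move=> h; rewrite /wick_term (bigD1 j) //=.
by case: h => /bin_small ->; rewrite ?mul0n ?muln0 ?mul0n scale0r.
Qed.

Lemma wick_term0 m1 m2 :
  wick_term m1 m2 (fun _ => 0%N)
    = 'X_[mkexp (fun j => alphaE m1 j + alphaE m2 j)%N
                (fun j => betaE m1 j + betaE m2 j)%N].
Proof.
rewrite /wick_term big1 ?scale1r; last by move=> j _; rewrite !bin0.
by congr 'X_[_]; apply: eq_mkexp => j; rewrite subn0.
Qed.

Definition kron (k : 'I_n) (j : 'I_n) : nat := j == k.

Lemma wick_term_kron m1 m2 k :
  wick_term m1 m2 (kron k)
    = (betaE m1 k * alphaE m2 k)%N%:R
      *: 'X_[mkexp (fun j => alphaE m1 j + alphaE m2 j - kron k j)%N
                   (fun j => betaE m1 j + betaE m2 j - kron k j)%N].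
Proof.
rewrite /wick_term (bigD1 k) //= big1 /kron ?eqxx ?muln1 ?bin1 ?muln1 //.
by move=> j /negbTE ->; rewrite !bin0.
Qed.

(* [kron k0] is an ['I_N.+1]-valued function only when N > 0. *)
Lemma sum_ffun_kron (V : zmodType) N (F : ('I_n -> nat) -> V) (k0 : 'I_n) :
  (forall f g, f =1 g -> F f = F g) ->
  (forall f, (exists2 j, j != k0 & f j != 0%N) \/ (1 < f k0)%N -> F f = 0) ->
  \sum_(k : {ffun 'I_n -> 'I_N.+1}) F (fun j => k j)
    = F (fun _ => 0%N) + (if (0 < N)%N then F (kron k0) else 0).
Proof.
move=> Fext F0; rewrite (bigD1 [ffun _ => ord0]) //=; congr (_ + _).
  by apply: Fext => j; rewrite ffunE.
case: N => [|N] /=.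
  apply: big1 => k k_nz; case/eqP: k_nz; apply/ffunP=> j; rewrite !ffunE.
  by apply/val_inj; case: (k j) => -[].
set e := [ffun j => if j == k0 then @Ordinal N.+2 1 isT else ord0].
have e_nz : e != [ffun _ => ord0].
  by apply/eqP => /ffunP /(_ k0); rewrite !ffunE eqxx => /(congr1 val).
rewrite (bigD1 e) /=; last by rewrite e_nz.
rewrite big1 ?addr0; first by apply: Fext => j; rewrite ffunE /kron; case: eqP.
move=> k /andP[k_nz k_ne]; apply: F0.
case: (boolP [exists j, (j != k0) && (k j != 0%N :> nat)]).
  by case/existsP=> j /andP[? ?]; left; exists j.
move=> hne; right; rewrite ltnNge; apply/negP => le1.
have k_off j : j != k0 -> nat_of_ord (k j) = 0%N.
  by move=> jk; apply/eqP; apply: contraNT hne => ?; apply/existsP; exists j; apply/andP.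
have /orP[/eqP k0_0 | /eqP k0_1] : (k k0 == 0%N :> nat) || (k k0 == 1%N :> nat).
  by case: (nat_of_ord (k k0)) le1 => [|[]].
- move/eqP: k_nz; apply; apply/ffunP => j; rewrite ffunE; apply/val_inj => /=.
  by case: (eqVneq j k0) => [->|/k_off].
- move/eqP: k_ne; apply; apply/ffunP => j; rewrite ffunE; apply/val_inj => /=.
  by case: (eqVneq j k0) => [->|/k_off].
Qed.

Definition mnum (k : 'I_n) : 'X_{1..n + n} := mkexp (kron k) (kron k).

Lemma numopE k : numop k = 'i *: 'X_[mnum k].
Proof. by []. Qed.

Definition mshift k m : 'X_{1..n + n} :=
  mkexp (fun j => alphaE m j + kron k j)%N (fun j => betaE m j + kron k j)%N.

Lemma wmono_mnum_l k m :
  wmono (mnum k) m = 'X_[mshift k m] + (alphaE m k)%:R *: 'X_[m].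
Proof.
rewrite wmonoE (sum_ffun_kron _ _ (wick_term _ _) k); last 2 first.
- by move=> f g; apply: eq_wick_term.
- move=> f [[j jk fj] | fk]; [apply: (@wick_term_eq0 _ _ _ j) | apply: (@wick_term_eq0 _ _ _ k)];
    by left; rewrite /mnum betaE_mkexp /kron ?(negbTE jk) ?lt0n ?eqxx.
rewrite wick_term0 ifT; last first.
  by have := mnm_le_mdeg (mnum k) (lshift n k); rewrite -/(alphaE _ _) alphaE_mkexp /kron eqxx.
rewrite wick_term_kron betaE_mkexp /kron eqxx mul1n; congr (_ + _).
  by congr 'X_[_]; apply: eq_mkexp => j; rewrite /mnum ?alphaE_mkexp ?betaE_mkexp addnC.
congr (_ *: _); rewrite -[in RHS](mkexpK m); congr 'X_[_]; apply: eq_mkexp => j;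
  by rewrite /mnum ?alphaE_mkexp ?betaE_mkexp addKn.
Qed.

Lemma wmono_mnum_r k m :
  wmono m (mnum k) = 'X_[mshift k m] + (betaE m k)%:R *: 'X_[m].
Proof.
rewrite wmonoE (sum_ffun_kron _ _ (wick_term _ _) k); last 2 first.
- by move=> f g; apply: eq_wick_term.
- move=> f [[j jk fj] | fk]; [apply: (@wick_term_eq0 _ _ _ j) | apply: (@wick_term_eq0 _ _ _ k)];
    by right; rewrite /mnum alphaE_mkexp /kron ?(negbTE jk) ?lt0n ?eqxx.
rewrite wick_term0; congr (_ + _).
  by congr 'X_[_]; apply: eq_mkexp => j; rewrite /mnum ?alphaE_mkexp ?betaE_mkexp.
case: ifP => [_ | N0].
  rewrite wick_term_kron alphaE_mkexp /kron eqxx muln1.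
  congr (_ *: _); rewrite -[in RHS](mkexpK m); congr 'X_[_]; apply: eq_mkexp => j;
    by rewrite /mnum ?alphaE_mkexp ?betaE_mkexp addnK.
have := mnm_le_mdeg m (rshift n k); rewrite -/(betaE _ _).
by move: N0; case: (mdeg m) => // _; rewrite leqn0 => /eqP ->; rewrite scale0r.
Qed.

Lemma wmono_mnum_comm k m :
  wmono (mnum k) m - wmono m (mnum k)
    = ((alphaE m k)%:R - (betaE m k)%:R) *: 'X_[m].
Proof. by rewrite wmono_mnum_l wmono_mnum_r scalerBl opprD addrACA subrr add0r. Qed.

Definition numwt k m : algC := 'i * ((alphaE m k)%:R - (betaE m k)%:R).

Definition numder k p : weyl n :=
  \sum_(m <- msupp p) (numwt k m * p@_m) *: 'X_[m].

Lemma mcoeff_numder k p m : (numder k p)@_m = numwt k m * p@_m.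
Proof.
rewrite /numder (@mcoeff_sum_scaleX (msupp p) _ id id) ?msupp_uniq //.
by case: ifP => // /negbT; rewrite -mcoeff_eq0 => /eqP ->; rewrite mulr0.
Qed.

Lemma numderD k : {morph numder k : p q / p + q}.
Proof.
by move=> p q; apply/mpolyP=> m; rewrite mcoeffD !mcoeff_numder mcoeffD mulrDr.
Qed.

Lemma numder0 k : numder k 0 = 0.
Proof. by apply/mpolyP=> m; rewrite mcoeff_numder !mcoeff0 mulr0. Qed.

Lemma numderN k p : numder k (- p) = - numder k p.
Proof. by apply/mpolyP=> m; rewrite mcoeffN !mcoeff_numder mcoeffN mulrN. Qed.

Lemma numderB k p q : numder k (p - q) = numder k p - numder k q.
Proof. by rewrite numderD numderN. Qed.

Lemma numderZ k c p : numder k (c *: p) = c *: numder k p.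
Proof. by apply/mpolyP=> m; rewrite mcoeffZ !mcoeff_numder mcoeffZ mulrCA. Qed.

Lemma numder_sum k (I : Type) (r : seq I) (P : pred I) (F : I -> weyl n) :
  numder k (\sum_(i <- r | P i) F i) = \sum_(i <- r | P i) numder k (F i).
Proof. exact: (big_morph _ (numderD k) (numder0 k)). Qed.

Lemma numderX k m : numder k 'X_[m] = numwt k m *: 'X_[m].
Proof.
apply/mpolyP=> m'; rewrite mcoeffZ !mcoeff_numder !mcoeffX.
by case: eqP => [->|]; rewrite ?mulr1 ?mulr0.
Qed.

Lemma numder_wick_term k m1 m2 f :
  numder k (wick_term m1 m2 f) = (numwt k m1 + numwt k m2) *: wick_term m1 m2 f.
Proof.
rewrite /wick_term numderZ numderX !scalerA; congr (_ *: _).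
set P := (\prod_(j < n) _)%N.
have [-> | P_nz] := eqVneq P 0%N; first by rewrite mul0r mulr0.
have : ('C(betaE m1 k, f k) * 'C(alphaE m2 k, f k) * (f k)`! != 0)%N.
  by apply: contraNneq P_nz => hk; rewrite /P (bigD1 k) //= hk.
rewrite !muln_eq0 !negb_or -!lt0n !bin_gt0 => /andP[/andP[le1 le2] _].
rewrite mulrC /numwt alphaE_mkexp betaE_mkexp !natrB ?natrD;
  try by [apply: leq_trans (leq_addl _ _) | apply: leq_trans (leq_addr _ _)].
by congr (_ * _); ring.
Qed.

Lemma numder_wmono k m1 m2 :
  numder k (wmono m1 m2) = (numwt k m1 + numwt k m2) *: wmono m1 m2.
Proof.
rewrite wmonoE numder_sum scaler_sumr.
by apply: eq_bigr => f _; rewrite numder_wick_term.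
Qed.

Lemma numder_wmul k p q :
  numder k (wmul p q) = wmul (numder k p) q + wmul p (numder k q).
Proof.
have q1 m : q@_m = 1 * q@_m by rewrite mul1r.
have p1 m : p@_m = 1 * p@_m by rewrite mul1r.
rewrite (wmul_coef_transform (mcoeff_numder k p) q1).
rewrite (wmul_coef_transform p1 (mcoeff_numder k q)).
rewrite /wmul numder_sum -big_split; apply: eq_bigr => m1 _.
rewrite numder_sum -big_split; apply: eq_bigr => m2 _.
by rewrite numderZ numder_wmono scalerA /= -scalerDl; congr (_ *: _); ring.
Qed.

Lemma wcomm_numop k q : wcomm (numop k) q = numder k q.
Proof.
have s_num : {subset msupp (numop k) <= [:: mnum k]}.
  by move=> m; rewrite numopE => /msuppZ_le; rewrite msuppX.
rewrite /wcomm (wmul_sum_superset _ _ (isT : uniq [:: mnum k]) (msupp_uniq q)) //.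
rewrite (wmul_sum_superset _ _ (msupp_uniq q) (isT : uniq [:: mnum k])) //.
rewrite big_cons big_nil addr0 numopE /numder.
under [X in _ - X]eq_bigr => m _ do rewrite big_cons big_nil addr0.
rewrite -sumrB; apply: eq_bigr => m _.
rewrite !mcoeffZ !mcoeffX eqxx mulr1 [q@_m * _]mulrC -scalerBr wmono_mnum_comm.
by rewrite scalerA /numwt mulrAC.
Qed.

Lemma numder_wcomm k p q :
  numder k (wcomm p q) = wcomm (numder k p) q + wcomm p (numder k q).
Proof. by rewrite /wcomm numderB !numder_wmul opprD [- _ - _]addrC addrACA. Qed.

Lemma wcomm_numop_wcomm_eq0 k xp xm :
  (wcomm (numop k) xp = 0 /\ wcomm (numop k) xm = 0) \/
  (exists mu, mode_cond xp xm k mu) ->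
  wcomm (numop k) (wcomm xp xm) = 0.
Proof.
case=> [[h1 h2] | [mu [_ [_ [h1 h2]]]]];
  rewrite wcomm_numop numder_wcomm -!wcomm_numop h1 h2.
  by rewrite /wcomm !wmul0l !wmul0r subrr addr0.
by rewrite /wcomm wmulZl wmulZr !wmulNl !wmulNr wmulZl wmulZr !subrr addr0.
Qed.

Definition mswap m : 'X_{1..n + n} := mkexp (betaE m) (alphaE m).

Lemma mswapK : involutive mswap.
Proof.
move=> m; rewrite {1}/mswap -[RHS]mkexpK.
by apply: eq_mkexp => j; rewrite /mswap ?alphaE_mkexp ?betaE_mkexp.
Qed.

Lemma mcoeff_wdag p m : (wdag p)@_m = (p@_(mswap m))^*.
Proof.
rewrite /wdag (@mcoeff_sum_scaleX (msupp p) _ mswap mswap) ?msupp_uniq //;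
  try exact: mswapK.
by case: ifP => // /negbT; rewrite -mcoeff_eq0 => /eqP ->; rewrite conjC0.
Qed.

Lemma wdagD : {morph @wdag n : p q / p + q}.
Proof. by move=> p q; apply/mpolyP=> m; rewrite mcoeffD !mcoeff_wdag mcoeffD rmorphD. Qed.

Lemma wdag0 : wdag (0 : weyl n) = 0.
Proof. by apply/mpolyP=> m; rewrite mcoeff_wdag !mcoeff0 conjC0. Qed.

Lemma wdagN p : wdag (- p) = - wdag p.
Proof. by apply/mpolyP=> m; rewrite mcoeffN !mcoeff_wdag mcoeffN rmorphN. Qed.

Lemma wdagB p q : wdag (p - q) = wdag p - wdag q.
Proof. by rewrite wdagD wdagN. Qed.

Lemma wdagZ c p : wdag (c *: p) = c^* *: wdag p.
Proof. by apply/mpolyP=> m; rewrite mcoeffZ !mcoeff_wdag mcoeffZ rmorphM. Qed.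

Lemma wdag_sum (I : Type) (r : seq I) (P : pred I) (F : I -> weyl n) :
  wdag (\sum_(i <- r | P i) F i) = \sum_(i <- r | P i) wdag (F i).
Proof. exact: (big_morph _ wdagD wdag0). Qed.

Lemma wdagX m : wdag 'X_[m] = 'X_[mswap m].
Proof.
apply/mpolyP=> m'; rewrite mcoeff_wdag !mcoeffX conjC_nat.
by rewrite (can2_eq mswapK mswapK).
Qed.

Lemma wdag_wick_term m1 m2 f :
  wdag (wick_term m1 m2 f) = wick_term (mswap m2) (mswap m1) f.
Proof.
rewrite /wick_term wdagZ wdagX conjC_nat; congr (_ *: 'X_[_]).
  congr _%:R; apply: eq_bigr => j _.
  by rewrite /mswap alphaE_mkexp betaE_mkexp [('C(betaE m1 j, _) * _)%N]mulnC.
by rewrite /mswap; apply: eq_mkexp => j; rewrite ?alphaE_mkexp ?betaE_mkexp addnC.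
Qed.

Lemma sum_ffun_widen (V : zmodType) N M (F : ('I_n -> nat) -> V) :
  (N.+1 <= M)%N -> (forall f g, f =1 g -> F f = F g) ->
  (forall f j, (N < f j)%N -> F f = 0) ->
  \sum_(k : {ffun 'I_n -> 'I_N.+1}) F (fun j => k j)
    = \sum_(k : {ffun 'I_n -> 'I_M}) F (fun j => k j).
Proof.
move=> le Fext F0.
rewrite [RHS](bigID (fun k : {ffun 'I_n -> 'I_M} => [forall j, k j < N.+1]%N)) /=.
rewrite [X in _ = _ + X]big1 ?addr0; last first.
  by move=> k /forallPn [j]; rewrite -leqNgt; apply: F0.
rewrite (reindex_onto (fun k : {ffun 'I_n -> 'I_N.+1} => [ffun j => widen_ord le (k j)])
   (fun k : {ffun 'I_n -> 'I_M} => [ffun j => (inord (k j) : 'I_N.+1)])) /=; last first.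
  move=> k /forallP h; apply/ffunP => j; rewrite !ffunE; apply/val_inj => /=.
  by rewrite inordK.
symmetry; apply: eq_big => [k | k _].
  apply/andP; split; first by apply/forallP => j; rewrite ffunE /=.
  by apply/eqP/ffunP => j; rewrite !ffunE; apply/val_inj; rewrite /= inordK.
by apply: Fext => j; rewrite ffunE.
Qed.

(* The adjoint of [wmono m1 m2] is a Wick sum over contractions bounded by
   [mdeg m1], whereas [wmono (mswap m2) (mswap m1)] uses [mdeg (mswap m2)]. *)
Lemma wmono_wide M m1 m2 : ((mdeg m1).+1 <= M)%N ->
  wmono m1 m2 = \sum_(c : {ffun 'I_n -> 'I_M}) wick_term m1 m2 (fun j => c j).
Proof.
move=> le; rewrite wmonoE (sum_ffun_widen _ _ _ (wick_term m1 m2) le) //.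
  by move=> f g; apply: eq_wick_term.
move=> f j hj; apply: (@wick_term_eq0 _ _ _ j); left.
exact: leq_ltn_trans (mnm_le_mdeg m1 (rshift n j)) hj.
Qed.

Lemma wdag_wmono m1 m2 : wdag (wmono m1 m2) = wmono (mswap m2) (mswap m1).
Proof.
set M := ((mdeg m1).+1 + (mdeg (mswap m2)).+1)%N.
rewrite (@wmono_wide M m1 m2) ?leq_addr // (@wmono_wide M) ?leq_addl //.
by rewrite wdag_sum; apply: eq_bigr => c _; rewrite wdag_wick_term.
Qed.

Lemma wdag_wmul p q : wdag (wmul p q) = wmul (wdag q) (wdag p).
Proof.
have mswap_inj : injective mswap by apply: inv_inj mswapK.
have msupp_wdag r : {subset msupp (wdag r) <= map mswap (msupp r)}.
  move=> m; rewrite mcoeff_msupp mcoeff_wdag => h.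
  rewrite -[m]mswapK; apply: map_f; rewrite mcoeff_msupp.
  by apply: contraNneq h => ->; rewrite conjC0.
have uniq_swap (r : weyl n) : uniq (map mswap (msupp r)).
  by rewrite (map_inj_uniq mswap_inj) msupp_uniq.
rewrite (wmul_sum_superset _ _ (uniq_swap q) (uniq_swap p) (msupp_wdag q) (msupp_wdag p)).
rewrite /wmul wdag_sum [RHS]big_map.
under [RHS]eq_bigr => m _ do rewrite big_map.
rewrite [RHS]exchange_big /=; apply: eq_bigr => m1 _.
rewrite wdag_sum; apply: eq_bigr => m2 _.
by rewrite wdagZ wdag_wmono !mcoeff_wdag !mswapK rmorphM mulrC.
Qed.

Lemma wdag_wcomm_skew xp xm : skew_herm xp -> skew_herm xm -> skew_herm (wcomm xp xm).
Proof.
rewrite /skew_herm => hp hm.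
by rewrite /wcomm wdagB !wdag_wmul hp hm !wmulNl !wmulNr !opprK opprB.
Qed.

Lemma numder_eq0_diag p m :
  (forall k, numder k p = 0) -> m \in msupp p -> alphaE m =1 betaE m.
Proof.
rewrite mcoeff_msupp => hD pm j.
have /eqP := congr1 (mcoeff m) (hD j).
rewrite mcoeff_numder mcoeff0 mulf_eq0 (negbTE pm) orbF /numwt mulf_eq0.
by rewrite (negbTE (neq0Ci _)) /= subr_eq0 eqr_nat => /eqP.
Qed.

Lemma in_A0_Aeq_diag_skew p :
  (forall k, numder k p = 0) -> skew_herm p -> in_A0_Aeq p.
Proof.
move=> hD hdag.
have swap_id m : m \in msupp p -> mswap m = m.
  move=> pm; rewrite /mswap -[RHS]mkexpK.
  by apply: eq_mkexp => j; rewrite (numder_eq0_diag _ hD pm).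
have conj_coef m : m \in msupp p -> (p@_m)^* = - p@_m.
  by move=> pm; have := congr1 (mcoeff m) hdag; rewrite mcoeff_wdag swap_id // mcoeffN.
have two_i_nz : (2%:R * 'i : algC) != 0 by rewrite mulf_neq0 ?neq0Ci ?pnatr_eq0.
exists [seq ([ffun j => alphaE m j], p@_m / (2%:R * 'i)) | m <- msupp p]; split.
  apply/allP => x /mapP [m pm ->] /=; apply/CrealP.
  by rewrite fmorph_div rmorphM /= conjCi conjC_nat conj_coef // mulrN invrN mulrNN.
rewrite {1}[p]mpolyE [RHS]big_map; apply: eq_big_seq => m pm /=.
rewrite /amono scalerA divfK //; congr (_ *: 'X_[_]).
rewrite -[LHS]mkexpK; apply: eq_mkexp => j;
  by rewrite ffunE ?(numder_eq0_diag _ hD pm).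
Qed.

End WeylAlgebra.

Unset Implicit Arguments.

Theorem lemma7 (n : nat) (hn : (0 < n)%N) (xp xm : weyl n) :
  complementary xp xm ->
  (forall k : 'I_n, wcomm (numop k) (wcomm xp xm) = 0) /\
  in_A0_Aeq (wcomm xp xm).
Proof.
move=> [hp [hm [_ [_ [hmodes _]]]]].
have ha k := wcomm_numop_wcomm_eq0 (hmodes k).
split=> //; apply: in_A0_Aeq_diag_skew; last exact: wdag_wcomm_skew.
by move=> k; rewrite -wcomm_numop.
Qed.
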